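(* Let $\Xi\subset\mathbb{F}^2$ be a finite set of distinct points, $\prec$ any term order on $\mathbb{F}[x,y]$, and $\Xi'\subset\Xi$ an $\mathcal{A}'$-cartesian subset for a lower set $\mathcal{A}'$. Then $\mathcal{A}'=\mathrm{N}_\prec(\Xi')\subset\mathrm{N}_\prec(\Xi)$; equivalently, $\{x^iy^j:(i,j)\in\mathcal{A}'\}$ equals the Gröbner escalier of $\mathcal{I}(\Xi')$ w.r.t. $\prec$ and is contained in the Gröbner escalier of $\mathcal{I}(\Xi)$ w.r.t. $\prec$.
   Context: $\mathbb{F}$ is a field. A finite set $\mathcal{A}\subset\mathbb{N}_0^2$ is a lower set if with each $(\alpha_1,\alpha_2)$ it contains all $(\alpha_1',\alpha_2')\in\mathbb{N}_0^2$ with $\alpha_1'\le\alpha_1,\alpha_2'\le\alpha_2$. A finite set $\Xi'$ of distinct points is $\mathcal{A}$-cartesian if $\Xi'=\{(x_i,y_j):(i,j)\in\mathcal{A}\}$ with pairwise distinct $x_i$ and pairwise distinct $y_j$. For a finite point set $\Xi$, $\mathcal{I}(\Xi)\subset\mathbb{F}[x,y]$ is the ideal of polynomials vanishing on $\Xi$; its Gröbner escalier w.r.t. $\prec$ is the set of monomials not divisible by the leading monomial (w.r.t. $\prec$) of any nonzero element of $\mathcal{I}(\Xi)$, and $\mathrm{N}_\prec(\Xi)=\{(i,j)\in\mathbb{N}_0^2: x^iy^j \text{ is in this escalier}\}$. *)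

(* Bivariate polynomials F[x,y] are encoded as {poly {poly F}}:
   the outer variable is y, the inner one is x, so the coefficient of
   x^i y^j in p is (p`_j)`_i. *)
From HB Require Import structures.
From mathcomp Require Import all_boot all_order all_algebra.
Set Implicit Arguments. Unset Strict Implicit. Unset Printing Implicit Defensive.
Import GRing.Theory.
Local Open Scope ring_scope.

Definition coef2 (F : fieldType) (p : {poly {poly F}}) (m : nat * nat) : F :=
  (p`_(m.2))`_(m.1).

Definition eval2 (F : fieldType) (p : {poly {poly F}}) (pt : F * F) : F :=
  (p.[(pt.2)%:P]).[pt.1].

Definition term_order (le : nat * nat -> nat * nat -> Prop) : Prop :=
  (forall a, le a a) /\
  [/\ (forall a b, le a b -> le b a -> a = b),
      (forall a b c, le a b -> le b c -> le a c),
      (forall a b, le a b \/ le b a),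
      (forall a b c, le a b -> le (a.1 + c.1, a.2 + c.2)%N (b.1 + c.1, b.2 + c.2)%N)
    & (forall a, le (0, 0)%N a)].

Definition is_lead_exp (F : fieldType) (le : nat * nat -> nat * nat -> Prop)
  (p : {poly {poly F}}) (m : nat * nat) : Prop :=
  coef2 p m != 0 /\ forall m', coef2 p m' != 0 -> le m' m.

Definition vanishes_on (F : fieldType) (Xi : seq (F * F)) (p : {poly {poly F}}) : Prop :=
  forall pt, pt \in Xi -> eval2 p pt = 0.

Definition in_escalier (F : fieldType) (le : nat * nat -> nat * nat -> Prop)
  (Xi : seq (F * F)) (a : nat * nat) : Prop :=
  ~ exists p : {poly {poly F}}, exists m : nat * nat,
      [/\ p != 0, vanishes_on Xi p, is_lead_exp le p m
        & (m.1 <= a.1)%N /\ (m.2 <= a.2)%N].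

Definition lower_set (A : seq (nat * nat)) : Prop :=
  forall a b, a \in A -> (b.1 <= a.1)%N -> (b.2 <= a.2)%N -> b \in A.

Definition cartesian (F : fieldType) (A : seq (nat * nat)) (Xi' : seq (F * F)) : Prop :=
  exists (xs ys : nat -> F),
    [/\ (forall a b, a \in A -> b \in A -> xs a.1 = xs b.1 -> a.1 = b.1),
        (forall a b, a \in A -> b \in A -> ys a.2 = ys b.2 -> a.2 = b.2)
      & (forall pt, pt \in Xi' <-> exists2 a, a \in A & pt = (xs a.1, ys a.2))].

(* If (i,j) lies in A, the lower set A contains the whole grid [0,i] x [0,j],
   so a polynomial vanishing on Xi' vanishes on an (i+1) x (j+1) grid with
   distinct nodes.  Reducing it modulo the two univariate node polynomials
   (of degrees i+1 and j+1) kills it, yet preserves its x^i y^j coefficient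
   when x^i y^j is its leading monomial: a term order refines divisibility,
   so no monomial componentwise above x^i y^j occurs.  Hence no leading
   monomial of I(Xi') divides x^i y^j.  If (i,j) is not in A, every point of
   A lies left of column i or below row j, so prod_(k<i) (x - x_k)
   prod_(l<j) (y - y_l) lies in I(Xi') and has leading monomial x^i y^j.
   Finally I(Xi) is contained in I(Xi'), whence N(Xi') is contained in
   N(Xi). *)
From HB Require Import structures.
From mathcomp Require Import all_boot all_order all_algebra.

Set Implicit Arguments. Unset Strict Implicit. Unset Printing Implicit Defensive.
Import GRing.Theory.
Local Open Scope ring_scope.

Section TermOrder.
Variable le : nat * nat -> nat * nat -> Prop.
Hypothesis le_ord : term_order le.

Lemma term_order_leq (a b : nat * nat) :
  (a.1 <= b.1)%N -> (a.2 <= b.2)%N -> le a b.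
Proof.
case: a b => [k l] [k' l'] /= kk' ll'.
case: le_ord => _ [_ _ _ le_add le0].
by have := le_add (0, 0)%N (k' - k, l' - l)%N (k, l) (le0 _); rewrite /= !subnK.
Qed.

Lemma lead_exp_coef2_eq0 (F : fieldType) (p : {poly {poly F}}) m b :
  is_lead_exp le p m -> (m.1 <= b.1)%N -> (m.2 <= b.2)%N -> b != m ->
  coef2 p b = 0.
Proof.
move=> [_ lead_max] mb1 mb2; apply: contraNeq => /lead_max le_bm.
case: le_ord => _ [le_anti _ _ _ _].
by rewrite (le_anti _ _ le_bm (term_order_leq mb1 mb2)).
Qed.

End TermOrder.

Section Grid.
Variable F : fieldType.

Lemma node_poly_dvdp (S : seq F) (f : {poly F}) :
  uniq S -> {in S, forall x, f.[x] = 0} -> \prod_(x <- S) ('X - x%:P) %| f.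
Proof.
move=> uS f0; apply: uniq_roots_dvdp; last by rewrite uniq_rootsE.
by apply/allP => x /f0 fx0; apply/eqP.
Qed.

Lemma horner_coef_modp (p : {poly {poly F}}) (W : {poly F}) i c :
  (\poly_(l < size p) (p`_l %% W)`_i).[c] = (p.[c%:P] %% W)`_i.
Proof.
rewrite horner_poly horner_coef.
rewrite (big_morph _ (fun f g => modpD W f g) (mod0p W)).
rewrite (big_morph _ (fun f g => coefD f g i) (coef0 _ i)).
apply: eq_bigr => l _.
by rewrite -rmorphXn [_ * _%:P]mulrC mul_polyC modpZl coefZ mulrC.
Qed.

(* The functional p |-> coefficient of x^i y^j in p mod (W_S(x), W_T(y))
   vanishes on polynomials vanishing on S x T, but equals coef2 p (i,j) when
   (i,j) is the leading exponent of p. *)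
Lemma grid_vanishing_lead_exp le (p : {poly {poly F}}) (S T : seq F) i j :
  term_order le -> uniq S -> uniq T -> size S = i.+1 -> size T = j.+1 ->
  (forall x y, x \in S -> y \in T -> eval2 p (x, y) = 0) ->
  ~ is_lead_exp le p (i, j).
Proof.
move=> le_ord uS uT sS sT p0 lead.
set WS := \prod_(x <- S) ('X - x%:P); set WT := \prod_(y <- T) ('X - y%:P).
have sWS : size WS = i.+2 by rewrite size_prod_XsubC sS.
have sWT : size WT = j.+2 by rewrite size_prod_XsubC sT.
pose q := \poly_(l < size p) (p`_l %% WS)`_i.
have upper_eq0 k l : (i <= k)%N -> (j <= l)%N -> (k, l) != (i, j) ->
    coef2 p (k, l) = 0.
  by move=> ik jl; apply: (lead_exp_coef2_eq0 le_ord lead).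
have q_upper l : (j <= l)%N -> q`_l = (p`_l)`_i.
  move=> jl; rewrite coef_poly; case: ltnP => [_|sp]; last first.
    by rewrite !nth_default ?mod0p ?coef0 // size_poly0.
  rewrite modp_small // sWS ltnS; apply/leq_sizeP => k ik.
  by apply: upper_eq0; rewrite ?(ltnW ik) // xpair_eqE gtn_eqF.
have size_q : (size q < size WT)%N.
  rewrite sWT ltnS; apply/leq_sizeP => l jl.
  rewrite q_upper ?(ltnW jl) //; apply: upper_eq0; rewrite ?(ltnW jl) //.
  by rewrite xpair_eqE (gtn_eqF jl) andbF.
have WT_dvd_q : WT %| q.
  apply: node_poly_dvdp => // y yT; rewrite horner_coef_modp.
  by rewrite modp_eq0 ?coef0 //; apply: node_poly_dvdp => // x xS; apply: p0.
have [coef_nz _] := lead; move: coef_nz.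
rewrite /coef2 /= -q_upper // -[q](modp_small size_q).
by rewrite modp_eq0 // coef0 eqxx.
Qed.

Definition corner_poly (S T : seq F) : {poly {poly F}} :=
  (\prod_(x <- S) ('X - x%:P))%:P * map_poly polyC (\prod_(y <- T) ('X - y%:P)).

Lemma coef2_corner_poly S T k l :
  coef2 (corner_poly S T) (k, l) =
  (\prod_(x <- S) ('X - x%:P))`_k * (\prod_(y <- T) ('X - y%:P))`_l.
Proof. by rewrite /coef2 /= coefCM coef_map /= coefMC. Qed.

Lemma lead_exp_corner_poly le (S T : seq F) :
  term_order le -> is_lead_exp le (corner_poly S T) (size S, size T).
Proof.
move=> le_ord; pose WS := \prod_(x <- S) ('X - x%:P).
pose WT := \prod_(y <- T) ('X - y%:P).
have sWS : size WS = (size S).+1 by rewrite size_prod_XsubC.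
have sWT : size WT = (size T).+1 by rewrite size_prod_XsubC.
have lead_WS : WS`_(size S) = 1.
  by have /monicP := monic_prod_XsubC S xpredT id; rewrite lead_coefE sWS.
have lead_WT : WT`_(size T) = 1.
  by have /monicP := monic_prod_XsubC T xpredT id; rewrite lead_coefE sWT.
split.
  by rewrite coef2_corner_poly -/WS -/WT lead_WS lead_WT mulr1 oner_neq0.
case=> k l; rewrite coef2_corner_poly -/WS -/WT mulf_eq0 negb_or.
case/andP=> WSk WTl; apply: (term_order_leq le_ord).
  by rewrite /= -ltnS -sWS ltnNge; apply: contra WSk => /(nth_default 0) ->.
by rewrite /= -ltnS -sWT ltnNge; apply: contra WTl => /(nth_default 0) ->.
Qed.

Lemma eval2_corner_poly (S T : seq F) x y :
  (x \in S) || (y \in T) -> eval2 (corner_poly S T) (x, y) = 0.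
Proof.
move=> xSyT; rewrite /eval2 /= hornerM hornerC horner_map /= hornerM hornerC.
by apply/eqP; rewrite mulf_eq0 -!/(root _ _) !root_prod_XsubC.
Qed.

End Grid.

Lemma in_escalier_subset (F : fieldType) le (Xi Xi' : seq (F * F)) a :
  {subset Xi' <= Xi} -> in_escalier le Xi' a -> in_escalier le Xi a.
Proof.
move=> sub N'a [p [m [p_nz p0 lead ma]]]; apply: N'a; exists p, m.
by split=> // pt /sub; exact: p0.
Qed.

Section Cartesian.
Variables (F : fieldType) (le : nat * nat -> nat * nat -> Prop).
Variables (A : seq (nat * nat)) (Xi' : seq (F * F)) (xs ys : nat -> F).
Hypotheses (le_ord : term_order le) (A_lower : lower_set A).
Hypothesis xs_inj :
  forall a b, a \in A -> b \in A -> xs a.1 = xs b.1 -> a.1 = b.1.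
Hypothesis ys_inj :
  forall a b, a \in A -> b \in A -> ys a.2 = ys b.2 -> a.2 = b.2.
Hypothesis Xi'E :
  forall pt, pt \in Xi' <-> exists2 a, a \in A & pt = (xs a.1, ys a.2).

Lemma lower_mem i j k l :
  (i, j) \in A -> (k <= i)%N -> (l <= j)%N -> (k, l) \in A.
Proof. exact: (@A_lower (i, j) (k, l)). Qed.

Lemma uniq_xs_iota i j : (i, j) \in A -> uniq [seq xs k | k <- iota 0 i.+1].
Proof.
move=> ijA; rewrite map_inj_in_uniq ?iota_uniq // => k k'.
rewrite !mem_iota !add0n !ltnS => /andP[_ ki] /andP[_ k'i].
move=> e; apply: (@xs_inj (k, 0) (k', 0) _ _ e).
  exact: lower_mem ijA ki (leq0n j).
exact: lower_mem ijA k'i (leq0n j).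
Qed.

Lemma uniq_ys_iota i j : (i, j) \in A -> uniq [seq ys l | l <- iota 0 j.+1].
Proof.
move=> ijA; rewrite map_inj_in_uniq ?iota_uniq // => l l'.
rewrite !mem_iota !add0n !ltnS => /andP[_ lj] /andP[_ l'j].
move=> e; apply: (@ys_inj (0, l) (0, l') _ _ e).
  exact: lower_mem ijA (leq0n i) lj.
exact: lower_mem ijA (leq0n i) l'j.
Qed.

Lemma mem_lower_in_escalier a : a \in A -> in_escalier le Xi' a.
Proof.
move=> aA [p [[i j] [_ p0 lead /= [ia ja]]]].
have ijA : (i, j) \in A := @A_lower a (i, j) aA ia ja.
apply: (grid_vanishing_lead_exp le_ord (uniq_xs_iota ijA) (uniq_ys_iota ijA)
  _ _ _ lead).
- by rewrite size_map size_iota.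
- by rewrite size_map size_iota.
move=> _ _ /mapP[k + ->] /mapP[l + ->].
rewrite !mem_iota !add0n !ltnS => /andP[_ ki] /andP[_ lj].
by apply/p0/Xi'E; exists (k, l) => //; exact: lower_mem ijA ki lj.
Qed.

Lemma in_escalier_mem_lower a : in_escalier le Xi' a -> a \in A.
Proof.
case: a => i j; apply: contraPT => ijA; apply.
pose S := [seq xs k | k <- iota 0 i]; pose T := [seq ys l | l <- iota 0 j].
have lead := lead_exp_corner_poly S T le_ord.
have sS : size S = i by rewrite size_map size_iota.
have sT : size T = j by rewrite size_map size_iota.
rewrite sS sT in lead; exists (corner_poly S T), (i, j); split=> //.
- by apply/eqP => p0; case: lead; rewrite p0 /coef2 !coef0 eqxx.
move=> _ /Xi'E[[k l] klA ->]; apply: eval2_corner_poly.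
case: (ltnP k i) => [ki|ik]; first by rewrite map_f // mem_iota.
case: (ltnP l j) => [lj|jl]; first by rewrite orbC map_f // mem_iota.
by rewrite (lower_mem klA ik jl) in ijA.
Qed.

End Cartesian.

Theorem mainTheorem6 (F : fieldType) (le : nat * nat -> nat * nat -> Prop)
  (Xi Xi' : seq (F * F)) (A : seq (nat * nat)) :
  term_order le ->
  {subset Xi' <= Xi} ->
  lower_set A ->
  cartesian A Xi' ->
  forall a : nat * nat,
    (a \in A <-> in_escalier le Xi' a) /\
    (in_escalier le Xi' a -> in_escalier le Xi a).
Proof.
move=> le_ord sub A_lower [xs [ys [xs_inj ys_inj Xi'E]]] a.
split; last exact: in_escalier_subset.
split.
- exact: (mem_lower_in_escalier le_ord A_lower xs_inj ys_inj Xi'E).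
- exact: (in_escalier_mem_lower le_ord A_lower Xi'E).
Qed.
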